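(* Let $A\in\mathbb{C}$ and expand $$\exp\Big(u\Big(\frac{\mathcal{S}(u\hbar z\partial_z)}{\mathcal{S}(\hbar z\partial_z)}-1\Big)\log(z-A)\Big)=\sum_{k\ge0}\hbar^{2k}c_{2k}(u,z).$$ Then $c_0(u,z)=1$, and for $k\ge1$, writing the Laurent expansion in $z-A$ as $c_{2k}(u,z)=\sum_{l\in\mathbb{Z}}d_{2k,l}(u)(z-A)^{-l}$, for every $l>0$ one has $d_{2k,l}(u)=(u+1)u(u-1)\cdots(u-l+1)\,p_{2k,l}(u)$ for some polynomial $p_{2k,l}(u)\in\mathbb{C}[u]$.
   Context: $\mathcal{S}(w)=(e^{w/2}-e^{-w/2})/w$; the operator $\mathcal{S}(u\hbar z\partial_z)/\mathcal{S}(\hbar z\partial_z)$ is understood as its power series in $\hbar z\partial_z$ (coefficients polynomial in $u$), applied termwise to $\log(z-A)$. *)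

From HB Require Import structures.
From mathcomp Require Import all_boot all_order all_algebra.
From mathcomp Require Export reals complex.
Set Implicit Arguments. Unset Strict Implicit. Unset Printing Implicit Defensive.
Import Order.TTheory GRing.Theory Num.Theory.
Local Open Scope ring_scope.

(* Encoding:
   - the inner polynomial variable 'X : {poly K} is the parameter u;
   - the outer polynomial variable 'X : {poly {poly K}} is w := (z - A)^{-1};
   - a formal series in hbar^2 is handled coefficientwise / by truncation. *)

Section Defs.
Variable K : fieldType.

(* Coefficients of S(w) = (e^{w/2}-e^{-w/2})/w = \sum_m sS m * w^(2m). *)
Definition sS (m : nat) : K := ((4 ^ m * (2 * m).+1 `!)%N%:R)^-1.

(* q j = coefficient of w^(2j) in S(u w)/S(w), a polynomial in u:
   \sum_(i <= j) sS i * q (j - i) = sS j * u^(2j). *)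
Fixpoint qseq (n : nat) : seq {poly K} :=
  match n with
  | 0 => [:: 1]
  | n'.+1 => let s := qseq n' in
      rcons s (sS n'.+1 *: 'X^(2 * n'.+1)
               - \sum_(1 <= i < n'.+2) sS i *: nth 0 s (n'.+1 - i))
  end.

Definition qS (j : nat) : {poly K} := nth 0 (qseq j) j.

(* The ring of Laurent polynomials in (z - A) with only non-positive powers,
   with coefficients in K[u]: element p represents \sum_l p`_l (z-A)^{-l}. *)
Definition LP := {poly {poly K}}.

(* the operator z d/dz: with w = (z-A)^{-1}, z dw/dz = -w - A w^2. *)
Definition zdz (A : K) (p : LP) : LP := - ('X + (A%:P)%:P * 'X^2) * p^`().

(* (z d/dz)^n log(z - A) for n >= 1, using z d/dz log(z-A) = z/(z-A) = 1 + A w. *)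
Definition Dlog (A : K) (n : nat) : LP := iter n.-1 (zdz A) (1 + (A%:P)%:P * 'X).

(* hbar^(2j) coefficient of  u (S(u hbar D)/S(hbar D) - 1) log(z-A). *)
Definition expo (A : K) (j : nat) : LP :=
  if j is 0 then 0 else ('X : {poly K})%:P * (qS j)%:P * Dlog A (2 * j).

(* c_{2k}(u,z): hbar^(2k) coefficient of exp(expo), computed from the truncation
   of expo (a polynomial in h := hbar^2) to degree k; since expo has no h^0 term,
   only the powers n <= k of the exponent contribute. *)
Definition ctrunc (A : K) (k : nat) : {poly LP} := \poly_(j < k.+1) expo A j.

Definition c (A : K) (k : nat) : LP :=
  (\sum_(n < k.+1) ((n`!%:R : K)^-1)%:P%:P%:P * (ctrunc A k) ^+ n)`_k.

Definition d (A : K) (k l : nat) : {poly K} := (c A k)`_l.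

Definition fallprod (l : nat) : {poly K} := \prod_(i < l.+1) ('X - (i%:R - 1)%:P).

End Defs.

(* The coefficient d_{2k,l}(u) vanishes at u = -1 and at u = 0, 1, ..., l-1.
   As S is even, S(-w)/S(w) = 1: at u = -1 the exponent is 0, so c_{2k} = 0 for k >= 1.
   At u = n in N, n S(n w)/S(w) = \sum_(s < n) e^(a_s w) with a_s = (n-1)/2 - s, and
   e^(a hbar z d/dz) is the dilation z |-> e^(a hbar) z, so the exponent becomes
   \sum_s log((e^(a_s hbar) z - A)/(z - A)) and c(n, z) is the product of the n factors
   1 + (e^(a_s hbar) - 1) z/(z - A): a polynomial of degree n in (z - A)^-1.
   Exponentials are compared through the recursion m f_m = \sum_j j L_j f_(m-j), which
   determines f = exp L from f_0. *)

From mathcomp Require Import all_boot all_order all_algebra.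
From mathcomp Require Import reals complex.
From mathcomp Require Import ring zify.
Set Implicit Arguments. Unset Strict Implicit. Unset Printing Implicit Defensive.
Import GRing.Theory Num.Theory.
Local Open Scope ring_scope.

Lemma sum_even_indices (V : nmodType) (F : nat -> V) k :
  (forall j, odd j -> F j = 0) ->
  \sum_(j < k.*2.+1) F j = \sum_(t < k.+1) F t.*2.
Proof.
move=> Fodd; elim: k => [|k IH]; first by rewrite !big_ord1.
rewrite doubleS big_ord_recr big_ord_recr [RHS]big_ord_recr /= IH.
by rewrite Fodd /= ?odd_double // addr0 -doubleS.
Qed.

Lemma sumr_ord_tail0 (V : nmodType) (F : nat -> V) a b : (a <= b)%N ->
  (forall n, (a <= n)%N -> F n = 0) -> \sum_(n < b) F n = \sum_(n < a) F n.
Proof.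
move=> ab F0; rewrite (big_ord_widen b F ab) [RHS]big_mkcond /=.
by apply: eq_bigr => i _; case: ltnP => // /F0.
Qed.

Lemma conv_lead1_inj (V : nzRingType) (s f g : nat -> V) : s 0%N = 1 ->
  (forall j, \sum_(i < j.+1) s i * f (j - i)%N = \sum_(i < j.+1) s i * g (j - i)%N) ->
  f =1 g.
Proof.
move=> s0 fg; elim/ltn_ind => j IH.
have := fg j; rewrite !big_ord_recl s0 !mul1r !subn0.
rewrite (eq_bigr (fun i : 'I_j => s (lift ord0 i) * g (j - lift ord0 i)%N)) => [/addIr //|i _].
rewrite IH // lift0; have := ltn_ord i; lia.
Qed.

Section ExpRecursion.
Variable V : nzRingType.

(* Up to order N, x f' = x L' f read on coefficients: f = f 0 * exp L when L 0 = 0. *)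
Definition exp_rec N (L f : nat -> V) :=
  forall m, (m <= N)%N -> f m *+ m = \sum_(j < m.+1) (L j *+ j) * f (m - j)%N.

Lemma eq_exp_rec N (L L' f f' : nat -> V) : exp_rec N L f ->
  (forall j, (j <= N)%N -> L j = L' j) -> (forall j, (j <= N)%N -> f j = f' j) ->
  exp_rec N L' f'.
Proof.
move=> h eL ef m mN; rewrite -ef // h //; apply: eq_bigr => j _.
have jm := ltn_ord j; rewrite eL ?ef //; lia.
Qed.

Definition spread2 (f : nat -> V) m := if odd m then 0 else f m./2.

Lemma exp_rec_spread2 N L f :
  exp_rec N L f -> exp_rec N.*2 (spread2 L) (spread2 f).
Proof.
move=> h m mN; case: (boolP (odd m)) => [om | em].
  rewrite /spread2 om mul0rn; apply/esym/big1 => j _.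
  case: ifPn => [|ej]; first by rewrite mul0rn mul0r.
  by rewrite oddB ?(negbTE ej) ?om ?mulr0 //; have := ltn_ord j; lia.
have {}em : m = (m./2).*2 by rewrite -[LHS]odd_double_half (negbTE em).
rewrite {}em in mN *; move: m./2 mN => k; rewrite leq_double => kN.
rewrite (sum_even_indices (F := fun j => (spread2 L j *+ j) * spread2 f (k.*2 - j)));
  last by move=> j oj; rewrite /spread2 oj mul0rn mul0r.
rewrite /spread2 odd_double doubleK -muln2 mulrnA h // -sumrMnl.
apply: eq_bigr => t _.
by rewrite muln2 -doubleB !odd_double !doubleK -mulrnAl -mulrnA muln2.
Qed.

End ExpRecursion.

Lemma exp_rec_rmorph (V W : nzRingType) (phi : {rmorphism V -> W}) N L f :
  exp_rec N L f -> exp_rec N (phi \o L) (phi \o f).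
Proof.
move=> h m mN; rewrite /= -rmorphMn h // rmorph_sum.
by apply: eq_bigr => j _; rewrite rmorphM rmorphMn.
Qed.

Lemma mulrnI (K : numFieldType) (V : lmodType K) m (v w : V) :
  (0 < m)%N -> v *+ m = w *+ m -> v = w.
Proof.
move=> m0 /(congr1 ( *:%R (m%:R : K)^-1)).
by rewrite -!scaler_nat !scalerA mulVf ?scale1r // pnatr_eq0 -lt0n.
Qed.

Lemma exp_rec_unique (K : numFieldType) (V : lalgType K) N (L f g : nat -> V) : f 0%N = g 0%N ->
  exp_rec N L f -> exp_rec N L g -> forall m, (m <= N)%N -> f m = g m.
Proof.
move=> fg0 hf hg; elim/ltn_ind => -[// | m] IH mN.
apply: (@mulrnI K V m.+1) => //; rewrite hf // hg //; apply: eq_bigr => j _.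
case: (posnP j) => [-> | j0]; first by rewrite !mulr0n !mul0r.
by rewrite IH //; have := ltn_ord j; lia.
Qed.

Section EulerOperator.
Variable R : comNzRingType.
Implicit Types L P : {poly R}.

Definition euler P : {poly R} := 'X * P^`().

Lemma coef_euler P i : (euler P)`_i = P`_i *+ i.
Proof. by rewrite /euler coefXM; case: i => [|i] //=; rewrite coef_deriv. Qed.

Lemma euler_mul P Q : euler (P * Q) = euler P * Q + P * euler Q.
Proof. by rewrite /euler derivM; ring. Qed.

Lemma euler_add P Q : euler (P + Q) = euler P + euler Q.
Proof. by rewrite /euler derivD mulrDr. Qed.

Lemma exp_rec_euler N L P : exp_rec N (nth 0 L) (nth 0 P) <->
  forall i, (i <= N)%N -> (euler P)`_i = (euler L * P)`_i.
Proof.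
have E i : (euler P)`_i = (euler L * P)`_i <->
    P`_i *+ i = \sum_(j < i.+1) (L`_j *+ j) * P`_(i - j).
  by rewrite coef_euler coefM; under eq_bigr do rewrite coef_euler.
by split=> h i iN; apply/E/h.
Qed.

Lemma exp_rec_mul N L1 P1 L2 P2 :
  exp_rec N (nth 0 L1) (nth 0 P1) -> exp_rec N (nth 0 L2) (nth 0 P2) ->
  exp_rec N (nth 0 (L1 + L2)) (nth 0 (P1 * P2)).
Proof.
move=> /exp_rec_euler h1 /exp_rec_euler h2; apply/exp_rec_euler => i iN.
have mulr_eq (Q Q' S : {poly R}) : (forall j, (j <= i)%N -> Q`_j = Q'`_j) ->
    (Q * S)`_i = (Q' * S)`_i.
  by move=> e; rewrite !coefM; apply: eq_bigr => j _; rewrite e //; have := ltn_ord j; lia.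
rewrite euler_mul coefD (mulr_eq (euler P1) (euler L1 * P1)) => [|j ji]; last by rewrite h1 //; lia.
rewrite [P1 * _]mulrC (mulr_eq (euler P2) (euler L2 * P2)) => [|j ji]; last by rewrite h2 //; lia.
suff -> : euler (L1 + L2) * (P1 * P2) = euler L1 * P1 * P2 + euler L2 * P2 * P1 by rewrite coefD.
by rewrite euler_add; ring.
Qed.

Lemma exp_rec_prod N (I : Type) (r : seq I) (L P : I -> {poly R}) :
  (forall s, exp_rec N (nth 0 (L s)) (nth 0 (P s))) ->
  exp_rec N (nth 0 (\sum_(s <- r) L s)) (nth 0 (\prod_(s <- r) P s)).
Proof.
move=> h; elim: r => [|s r IH]; last by rewrite !big_cons; apply: exp_rec_mul.
move=> m _; rewrite !big_nil coef1 big1 => [|j _]; last by rewrite coef0 mul0rn mul0r.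
by case: m => [|m] /=; rewrite ?mulr0n ?mul0rn.
Qed.

Definition exp_trunc (g F : nat -> R) k :=
  (\sum_(n < k.+1) (g n)%:P * (\poly_(j < k.+1) F j) ^+ n)`_k.

Section TruncatedExponential.
Variables (g F : nat -> R).
Hypotheses (g_fact : forall n, g n.+1 *+ n.+1 = g n) (F0 : F 0%N = 0).

Let T M : {poly R} := \poly_(j < M.+1) F j.
Let Q M N : {poly R} := \sum_(n < M.+1) (g n)%:P * T N ^+ n.

Let coef_T M j : (T M)`_j = if (j <= M)%N then F j else 0.
Proof. by rewrite coef_poly. Qed.

Let coef_expT_low M n i : (i < n)%N -> (T M ^+ n)`_i = 0.
Proof.
elim: n i => [//|n IH] i lt_in; rewrite exprS coefM big1 // => j _.
case: (posnP j) => [->|j0]; first by rewrite coef_T leq0n F0 mul0r.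
by rewrite IH ?mulr0 //; have := ltn_ord j; lia.
Qed.

Let coef_expT M M' n i : (i <= M)%N -> (i <= M')%N ->
  (T M ^+ n)`_i = (T M' ^+ n)`_i.
Proof.
elim: n i => [|n IH] i iM iM'; first by rewrite !expr0.
rewrite !exprS !coefM; apply: eq_bigr => j _; have := ltn_ord j => ji.
by rewrite IH ?coef_T ?ifT //; lia.
Qed.

Let coef_Q M N i : (i <= M)%N -> (i <= N)%N -> (Q M N)`_i = exp_trunc g F i.
Proof.
move=> iM iN; rewrite /exp_trunc !coef_sum.
have tail0 M' n : (i < n)%N -> ((g n)%:P * T M' ^+ n)`_i = 0.
  by move=> lt_in; rewrite coefCM coef_expT_low ?mulr0.
rewrite (sumr_ord_tail0 (F := fun n => ((g n)%:P * T N ^+ n)`_i) _ (tail0 N)) //.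
by apply: eq_bigr => n _; rewrite !coefCM (@coef_expT N i n i iN (leqnn i)).
Qed.

Let deriv_Q M N : (Q M.+1 N)^`() = Q M N * (T N)^`().
Proof.
rewrite /Q big_ord_recl expr0 mulr1 derivD derivC add0r raddf_sum mulr_suml.
apply: eq_bigr => n _; rewrite /= deriv_mulC deriv_exp -[g n]g_fact polyCMn.
by rewrite /bump leq0n add1n /=; ring.
Qed.

Lemma exp_trunc_rec N : exp_rec N F (exp_trunc g F).
Proof.
move=> [|k] _; first by rewrite mulr0n big_ord1 mulr0n mul0r.
have -> : exp_trunc g F k.+1 *+ k.+1 = (Q k.+1 k.+1)^`()`_k by rewrite coef_deriv coef_Q.
rewrite deriv_Q mulrC coefM [RHS]big_ord_recl mulr0n mul0r add0r.
apply: eq_bigr => j _; have := ltn_ord j => jk.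
by rewrite coef_deriv coef_T ifT ?lift0 ?subSS ?coef_Q //; lia.
Qed.

End TruncatedExponential.

End EulerOperator.

(* In the variable w = (z - A)^-1 (a = A): zratio is z/(z - A), zdz_w is z d/dz, and
   zdz_log j is (z d/dz)^(j+1) log(z - A). *)
Section LogDerivatives.
Variables (R : comNzRingType) (a : R).

Definition zratio : {poly R} := 1 + a%:P * 'X.
Definition zdz_w (p : {poly R}) : {poly R} := - ('X + a%:P * 'X^2) * p^`().
Definition zdz_log j := iter j zdz_w zratio.

Lemma size_zratio : (size zratio <= 2)%N.
Proof.
rewrite (leq_trans (size_polyD _ _)) // geq_max size_poly1 mul_polyC.
by rewrite (leq_trans (size_scale_leq _ _)) // size_polyX.
Qed.

Lemma zdz_wB p q : zdz_w (p - q) = zdz_w p - zdz_w q.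
Proof. by rewrite /zdz_w derivB mulrBr. Qed.

Lemma zdz_wM p q : zdz_w (p * q) = zdz_w p * q + p * zdz_w q.
Proof. by rewrite /zdz_w derivM; ring. Qed.

Lemma zdz_w_zratio : zdz_w zratio = zratio - zratio ^+ 2.
Proof. by rewrite /zdz_w /zratio derivD derivC add0r deriv_mulC derivX mulr1; ring. Qed.

Let Sig k := \sum_(j < k) zdz_log j *+ 'C(k, j).

Let Sig_rec k : Sig k.+1 = Sig k + zdz_log k + zdz_w (Sig k).
Proof.
rewrite /Sig big_ord_recl bin0.
under eq_bigr => i _ do rewrite lift0 binS mulrnDr.
rewrite big_split /= addrA; congr (_ + _).
  have -> : zdz_log k = zdz_log k *+ 'C(k, k) by rewrite binn.
  by rewrite -(big_ord_recr k (fun j => zdz_log j *+ 'C(k, j))) big_ord_recl bin0.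
rewrite /zdz_w raddf_sum mulr_sumr; apply: eq_bigr => i _.
by rewrite /= derivMn mulrnAr.
Qed.

Lemma zdz_log_binomial k :
  zdz_log k = zratio - zratio * \sum_(j < k) zdz_log j *+ 'C(k, j).
Proof.
elim: k => [|k IH]; first by rewrite big_ord0 mulr0 subr0.
rewrite -/(Sig k.+1) Sig_rec [zdz_log k.+1]/zdz_log iterS -/(zdz_log k) IH.
by rewrite zdz_wB zdz_wM zdz_w_zratio -/(Sig k); ring.
Qed.

End LogDerivatives.

Arguments zdz_log : simpl never.

Lemma map_zdz_log (R S : comNzRingType) (f : {rmorphism R -> S}) (a : R) j :
  map_poly f (zdz_log a j) = zdz_log (f a) j.
Proof.
elim: j => [|j IH].
  by rewrite /zdz_log /zratio /= rmorphD rmorph1 rmorphM /= map_polyC map_polyX.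
by rewrite /zdz_log !iterS -!/(zdz_log _ _) -IH /zdz_w rmorphM rmorphN rmorphD rmorphM /=
  map_polyX map_polyXn map_polyC deriv_map.
Qed.

Section ExpCoefficients.
Variable K : numFieldType.
Implicit Types a b : K.

Definition expc a m : K := a ^+ m / m`!%:R.

Lemma expcM a b i m : (i <= m)%N ->
  expc a i * expc b (m - i) = (a ^+ i * b ^+ (m - i)) *+ 'C(m, i) / m`!%:R.
Proof.
move=> im; rewrite /expc -(bin_fact im) -[_ *+ 'C(m, i)]mulr_natr !natrM.
have : ('C(m, i)%:R : K) != 0 by rewrite pnatr_eq0 -lt0n bin_gt0.
move: (m - i)%N 'C(m, i) => r C C0.
by field; rewrite C0 !pnatr_eq0 -!lt0n !fact_gt0.
Qed.

Lemma expc_conv a b m :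
  \sum_(i < m.+1) expc a i * expc b (m - i) = expc (a + b) m.
Proof.
rewrite [RHS]/expc addrC exprDn mulr_suml; apply: eq_bigr => i _.
by rewrite expcM ?[a ^+ i * _]mulrC // -ltnS.
Qed.

Lemma expcZ c a i : expc (c * a) i = c ^+ i * expc a i.
Proof. by rewrite /expc exprMn mulrA. Qed.

Lemma expcN a i : expc (- a) i = (-1) ^+ i * expc a i.
Proof. by rewrite -(mulN1r a) expcZ. Qed.

Lemma expc_conv_succ a b m :
  \sum_(i < m.+1) expc a i.+1 * expc b (m - i) = expc (a + b) m.+1 - expc b m.+1.
Proof.
rewrite -expc_conv (big_ord_recl m.+1) subn0 [expc a _]/expc expr0 fact0 divr1 mul1r.
rewrite [RHS]addrC addKr.
by apply: eq_bigr => i _; rewrite lift0 subSS.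
Qed.

Lemma expcB_opp a i :
  expc a i - expc (- a) i = if odd i then expc a i *+ 2 else 0.
Proof.
rewrite expcN -signr_odd; case: odd.
  by rewrite expr1 mulN1r opprK mulr2n.
by rewrite expr0 mul1r subrr.
Qed.

Lemma expcS a i : expc a i.+1 *+ i.+1 = a * expc a i.
Proof.
rewrite /expc factS natrM -[_ *+ i.+1]mulr_natr exprS; field.
by rewrite nat1r !pnatr_eq0 -lt0n fact_gt0.
Qed.

Lemma expc_binomial a i k : (i <= k)%N ->
  expc a i * expc a (k - i) = expc a k *+ 'C(k, i).
Proof. by move=> ik; rewrite expcM // -exprD subnKC // mulrnAl. Qed.

End ExpCoefficients.

Section DilationFactor.
Variables (K : numFieldType) (A : K).

(* The hbar^m coefficients of (e^(a hbar) z - A)/(z - A) = 1 + (e^(a hbar) - 1) z/(z - A)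
   and of its logarithm e^(a hbar z d/dz) log(z - A) - log(z - A). *)
Definition dil_ratio (a : K) m : {poly K} :=
  if m is 0 then 1 else (expc a m)%:P * zratio A.

Definition dil_log (a : K) m : {poly K} :=
  if m is 0 then 0 else (expc a m)%:P * zdz_log A m.-1.

Lemma exp_rec_dil N a : exp_rec N (dil_log a) (dil_ratio a).
Proof.
move=> [|k] _; first by rewrite mulr0n big_ord1 mulr0n mul0r.
rewrite big_ord_recl mulr0n mul0r add0r.
under eq_bigr => i _ do rewrite lift0 subSS /= -mulrnAl -polyCMn expcS.
rewrite big_ord_recr /= subnn mulr1 /= -mulrnAl -polyCMn expcS.
have -> : zratio A = zdz_log A k + zratio A * \sum_(j < k) zdz_log A j *+ 'C(k, j).
  by rewrite zdz_log_binomial subrK.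
rewrite mulrDr addrC mulr_sumr mulr_sumr; congr (_ + _); apply: eq_bigr => i _.
have ik := ltn_ord i.
have -> : dil_ratio a (k - i) = (expc a (k - i))%:P * zratio A.
  by move: ik; rewrite -subn_gt0; case: (k - i)%N.
rewrite !mulrnAr -mulrnAl -polyCMn -mulrnAr -(expc_binomial a (ltnW ik)) !polyCM.
ring.
Qed.

Definition dil_prod N n (a : nat -> K) : {poly {poly K}} :=
  \prod_(s < n) \poly_(i < N.+1) dil_ratio (a s) i.

Lemma exp_rec_dil_prod N n (a : nat -> K) :
  exp_rec N (nth 0 (\sum_(s < n) \poly_(i < N.+1) dil_log (a s) i))
            (nth 0 (dil_prod N n a)).
Proof.
apply: exp_rec_prod => s.
by apply: (eq_exp_rec (@exp_rec_dil N (a s))) => j jN; rewrite coef_poly ltnS jN.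
Qed.

Lemma coef0_dil_prod N n (a : nat -> K) : (dil_prod N n a)`_0 = 1.
Proof.
elim: n => [|n IH]; first by rewrite /dil_prod big_ord0 coef1.
by rewrite /dil_prod big_ord_recr coef0M -/(dil_prod _ _ _) IH coef_poly mul1r.
Qed.

Lemma size_coef_dil_prod N n (a : nat -> K) i :
  (size ((dil_prod N n a)`_i)%R <= n.+1)%N.
Proof.
elim: n i => [|n IH] i.
  rewrite /dil_prod big_ord0 coef1.
  by case: (i == 0%N); rewrite ?mulr1n ?size_poly1 ?size_poly0.
rewrite /dil_prod (big_ord_recr n) /= -/(dil_prod N n a) coefM.
apply: (big_ind (fun p : {poly K} => size p <= n.+2)%N) => [|p q|j _].
- by rewrite size_poly0.
- by move=> sp sq; apply: leq_trans (size_polyD _ _) _; rewrite geq_max sp sq.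
apply: leq_trans (size_polyMleq _ _) _.
rewrite -subn1 leq_subLR add1n -(addn2 n.+1) leq_add // coef_poly.
case: ifP => _; last by rewrite size_poly0.
case: (i - j)%N => [|m]; first by rewrite size_poly1.
by rewrite /= mul_polyC (leq_trans (size_scale_leq _ _)) // size_zratio.
Qed.

End DilationFactor.

Section QSeries.
Variable K : numFieldType.

Lemma sS0 : sS K 0 = 1.
Proof. by rewrite /sS invr1. Qed.

Lemma sS_expc t : sS K t = expc 2^-1 (2 * t).+1 *+ 2.
Proof.
rewrite /sS /expc natrM natrX invfM -mulrnAl; congr (_ * _).
have half2 : (2^-1 : K) *+ 2 = 1 by rewrite -(mulr_natr (2^-1 : K) 2) mulVf // pnatr_eq0.
rewrite exprSr -mulrnAr half2 mulr1.
by rewrite exprM !exprVn expr2 -natrM.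
Qed.

Lemma size_qseq j : size (qseq K j) = j.+1.
Proof. by elim: j => [|j IH] //=; rewrite size_rcons IH. Qed.

Lemma nth_qseq j i : (i <= j)%N -> nth 0 (qseq K j) i = qS K i.
Proof.
elim: j => [|j IH] ij; first by rewrite (_ : i = 0%N) //; lia.
rewrite /= nth_rcons size_qseq; case: ltngtP ij => // [lt_ij _|-> _]; first by rewrite IH.
by rewrite /qS /= nth_rcons size_qseq ltnn eqxx.
Qed.

Lemma qS_conv j : \sum_(i < j.+1) sS K i *: qS K (j - i) = sS K j *: 'X^(2 * j).
Proof.
case: j => [|j]; first by rewrite big_ord1 sS0 !scale1r.
rewrite big_ord_recl sS0 scale1r subn0 {1}/qS /= nth_rcons size_qseq ltnn eqxx.
rewrite big_add1 big_mkord [X in _ + X](eq_bigr (fun i : 'I_j.+1 =>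
  sS K i.+1 *: (qseq K j)`_(j.+1 - i.+1))) ?subrK // => i _.
by rewrite /bump leq0n add1n nth_qseq //; lia.
Qed.

Lemma horner_qS_conv x j :
  \sum_(i < j.+1) sS K i * (qS K (j - i)).[x] = sS K j * x ^+ (2 * j).
Proof.
have := congr1 (horner^~ x) (qS_conv j); rewrite /= horner_sum hornerZ hornerXn => <-.
by apply: eq_bigr => i _; rewrite hornerZ.
Qed.

(* S is even, so S(-w)/S(w) = 1. *)
Lemma qS_Nroot j : (qS K j.+1).[-1] = 0.
Proof.
suff /(_ j.+1) : (fun i => (qS K i).[-1]) =1 (fun i => (i == 0%N)%:R) by [].
apply: (conv_lead1_inj sS0) => i.
rewrite horner_qS_conv exprM sqrrN expr1n expr1n mulr1 big_ord_recr /= subnn mulr1.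
by rewrite big1 ?add0r // => k _; rewrite subn_eq0 leqNgt ltn_ord mulr0.
Qed.

End QSeries.

Section SymmetricNodes.
Variable K : numFieldType.

(* n S(n w)/S(w) = \sum_(s < n) e^(sym_node n s * w), with w^i coefficient node_expc n i. *)
Definition sym_node n s : K := (n%:R - 1) / 2 - s%:R.

Definition node_expc n i := \sum_(s < n) expc (sym_node n s) i.

Lemma node_expc_odd n i : odd i -> node_expc n i = 0.
Proof.
move=> oi; have opp : node_expc n i = - node_expc n i.
  rewrite {1}/node_expc (reindex_inj rev_ord_inj) /= -sumrN; apply: eq_bigr => s _.
  have -> : sym_node n (n - s.+1) = - sym_node n s.
    rewrite /sym_node natrB; last by have := ltn_ord s; lia.
    by rewrite -natr1; field.
  by rewrite expcN -signr_odd oi expr1 mulN1r.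
have : node_expc n i *+ 2 == 0 by rewrite mulr2n {1}opp addNr.
by rewrite mulrn_eq0 => /eqP.
Qed.

(* (e^(w/2) - e^(-w/2)) \sum_s e^(sym_node n s * w) telescopes to e^(n w/2) - e^(-n w/2). *)
Lemma node_expc_conv n m :
  \sum_(i < m.+1) (expc 2^-1 i.+1 - expc (- 2^-1) i.+1) * node_expc n (m - i)
  = expc (n%:R / 2) m.+1 - expc (- (n%:R / 2)) m.+1.
Proof.
rewrite /node_expc; under eq_bigr do rewrite mulr_sumr.
rewrite exchange_big /=.
under eq_bigr => s _.
  rewrite (eq_bigr _ (fun i _ => mulrBl _ _ _)) sumrB !expc_conv_succ opprB addrA subrK.
  rewrite (_ : 2^-1 + _ = n%:R / 2 - s%:R); last by rewrite /sym_node; field.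
  rewrite (_ : - 2^-1 + _ = n%:R / 2 - s.+1%:R); last by rewrite /sym_node -natr1; field.
  over.
pose F k := expc (n%:R / 2 - k%:R : K) m.+1.
rewrite /= -(big_mkord xpredT (fun k => F k - F k.+1)).
rewrite (@telescope_sumr_eq _ 0 n (fun k => - F k)) // => [|k _]; last by rewrite opprK addrC.
by rewrite /F opprK subr0 addrC; congr (_ - expc _ _); field.
Qed.

Lemma node_expc_sS_conv n j :
  \sum_(t < j.+1) sS K t * node_expc n (2 * (j - t)) = sS K j * n%:R ^+ (2 * j).+1.
Proof.
have := node_expc_conv n (2 * j).
rewrite mul2n (sum_even_indices (F := fun i =>
  (expc 2^-1 i.+1 - expc (- 2^-1) i.+1) * node_expc n (j.*2 - i))) => [|i oi];
  last by rewrite expcB_opp /= oi mul0r.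
rewrite !expcB_opp /= !odd_double /= => conv.
have -> : sS K j * n%:R ^+ j.*2.+1 = expc (n%:R / 2) j.*2.+1 *+ 2.
  by rewrite mulrC expcZ sS_expc mul2n mulrnAr.
rewrite -conv; apply: eq_bigr => t _.
by rewrite sS_expc !mul2n doubleB expcB_opp /= odd_double.
Qed.

Lemma horner_qS_nat n j : n%:R * (qS K j).[n%:R] = node_expc n (2 * j).
Proof.
suff qS_node : (fun j => n%:R * (qS K j).[n%:R]) =1 (fun j => node_expc n (2 * j)).
  exact: qS_node.
apply: (conv_lead1_inj (sS0 K)) => {}j /=.
rewrite node_expc_sS_conv; under eq_bigr do rewrite mulrCA.
by rewrite -mulr_sumr horner_qS_conv mulrCA -exprS.
Qed.

End SymmetricNodes.

Arguments sym_node {K}.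
Arguments node_expc {K}.

Section Specialization.
Variables (K : numFieldType) (A : K).

Lemma c_exp_rec N : exp_rec N (expo A) (c A).
Proof.
apply: (@exp_trunc_rec _ (fun n => ((n`!%:R : K)^-1)%:P%:P)) => // n.
rewrite -!polyCMn; congr (_%:P%:P).
rewrite factS natrM invfM -mulrnAl -(mulr_natr (n.+1%:R^-1) n.+1).
by rewrite mulVf ?mul1r // pnatr_eq0.
Qed.

Lemma c0 : c A 0 = 1.
Proof. by rewrite /c big_ord1 expr0 mulr1 coefC /= invr1. Qed.

Lemma horner_eval_expo x j :
  map_poly (horner_eval x) (expo A j.+1) = (x * (qS K j.+1).[x])%:P * zdz_log A (2 * j).+1.
Proof.
rewrite /expo (_ : Dlog A (2 * j.+1) = zdz_log A%:P (2 * j).+1); last by rewrite /Dlog mulnS.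
by rewrite rmorphM /= map_zdz_log !rmorphM /= !map_polyC /= !horner_evalE hornerX hornerC -polyCM.
Qed.

Lemma c_eval_N1 k : (0 < k)%N -> map_poly (horner_eval (-1)) (c A k) = 0.
Proof.
move=> k0; apply: (@mulrnI K _ k) => //.
rewrite mul0rn (exp_rec_rmorph _ (@c_exp_rec k)) //= big1 // => -[[|t] ?] _ /=.
  by rewrite mulr0n mul0r.
by rewrite horner_eval_expo qS_Nroot mulr0 mul0r mul0rn mul0r.
Qed.

Lemma sum_dil_log_nodes n j :
  \sum_(s < n) dil_log A (sym_node n s) j
  = spread2 (map_poly (horner_eval n%:R) \o expo A) j.
Proof.
case: j => [|i]; first by rewrite big1 // /spread2 /= rmorph0.
rewrite /dil_log -mulr_suml -rmorph_sum -/(@node_expc K n i.+1) /spread2.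
case: ifPn => [odd_i|]; first by rewrite node_expc_odd // mul0r.
rewrite /= negbK => odd_i.
have [j ->] : exists j, i = (2 * j).+1.
  by exists i./2; rewrite -[LHS]odd_double_half odd_i mul2n.
have half_2j : (2 * j)./2 = j by rewrite mul2n doubleK.
by rewrite /= -/(expo A (2 * j)./2.+1) half_2j horner_eval_expo horner_qS_nat mulnS.
Qed.

Lemma c_eval_nat k n : map_poly (horner_eval n%:R) (c A k)
  = (dil_prod A k.*2 n (sym_node n))`_k.*2.
Proof.
pose ev := map_poly (horner_eval (n%:R : K)).
have ev_c_rec := exp_rec_spread2 (exp_rec_rmorph ev (@c_exp_rec k)).
have dil_rec : exp_rec k.*2 (spread2 (ev \o expo A)) (nth 0 (dil_prod A k.*2 n (sym_node n))).
  apply: (eq_exp_rec (exp_rec_dil_prod _ _ _)) => // j jN.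
  by rewrite coef_sum -sum_dil_log_nodes; apply: eq_bigr => s _; rewrite coef_poly ltnS jN.
have := exp_rec_unique _ ev_c_rec dil_rec (leqnn _).
by rewrite /spread2 odd_double doubleK /= c0 rmorph1 coef0_dil_prod => ->.
Qed.

Lemma c_coef_nat_root k n l : (n < l)%N -> ((c A k)`_l).[n%:R] = 0.
Proof.
move=> nl; rewrite -horner_evalE -coef_map c_eval_nat nth_default //.
exact: leq_trans (size_coef_dil_prod _ _ _ _ _) nl.
Qed.

End Specialization.

Lemma fallprod_dvd (K : numFieldType) (p : {poly K}) l :
  (forall i, (i <= l)%N -> root p (i%:R - 1)) -> exists q, p = fallprod K l * q.
Proof.
move=> p_root.
have [q ->] : exists q, p = q * \prod_(z <- [seq i%:R - 1 | i <- iota 0 l.+1]) ('X - z%:P).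
  apply: uniq_roots_prod_XsubC.
    by rewrite all_map; apply/allP => i; rewrite mem_iota => /andP [_ il]; apply: p_root.
  rewrite uniq_rootsE map_inj_uniq ?iota_uniq // => i j /addIr /eqP.
  by rewrite eqr_nat => /eqP.
exists q; rewrite mulrC /fallprod big_map.
by rewrite -(big_mkord xpredT (fun i => 'X - (i%:R - 1)%:P)).
Qed.

Theorem lemma4p2 (R : realType) (A : R[i]) :
  c A 0 = 1 /\
  forall k l : nat, (0 < k)%N -> (0 < l)%N ->
    exists p : {poly R[i]}, d A k l = fallprod R[i] l * p.
Proof.
split=> [|k l k0 _]; first exact: c0.
apply: fallprod_dvd => -[_ | i il]; apply/eqP.
  by rewrite sub0r -horner_evalE -coef_map c_eval_N1 // coef0.
by rewrite -natr1 addrK c_coef_nat_root.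
Qed.
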